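(* Let $T$ be a string and $T'$ be obtained from $T$ by a single character edit (insertion, substitution, or deletion). Let $\mathcal{N}_2=\big((\mathsf{M}(T')\setminus\mathsf{M}(T))\setminus\{T'\}\big)\cap\mathsf{LeftM}(T)$ and $\mathcal{Q}=(\mathsf{M}(T')\cap\mathsf{M}(T))\setminus\{T'\}$. Then $$\sum_{x\in\mathcal{N}_2\cup\mathcal{Q}}\mathsf{D}_{T'}(x)\le 3\,\mathsf{size}(T)+2 .$$
   Context: Strings are over an alphabet $\Sigma$; $\mathrm{Substr}(T)$, $\mathrm{Prefix}(T)$, $\mathrm{Suffix}(T)$ are the sets of substrings, prefixes, suffixes of $T$. A string $w\in\mathrm{Substr}(T)$ is left-maximal in $T$ if $w\in\mathrm{Prefix}(T)$ or there exist distinct $a,b\in\Sigma$ with $aw,bw\in\mathrm{Substr}(T)$; right-maximal if $w\in\mathrm{Suffix}(T)$ or there exist distinct $a,b$ with $wa,wb\in\mathrm{Substr}(T)$. $\mathsf{LeftM}(T)$, $\mathsf{RightM}(T)$ denote these sets and $\mathsf{M}(T)=\mathsf{LeftM}(T)\cap\mathsf{RightM}(T)$. For a string $x$, $\mathsf{D}_T(x)=|\{a\in\Sigma: xa\in\mathrm{Substr}(T)\}|$, and $\mathsf{size}(T)=\sum_{x\in\mathsf{M}(T)}\mathsf{D}_T(x)$ (number of edges of the CDAWG of $T$). A single character edit means: insertion of one character at some position, substitution of one character by a different one, or deletion of one character. *)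

From mathcomp Require Import all_boot.
Set Implicit Arguments. Unset Strict Implicit. Unset Printing Implicit Defensive.

Section Strings.
Variable S : eqType.
Implicit Types (T w x : seq S).

Definition is_substr w T : bool := infix w T.

Definition substrings T : seq (seq S) :=
  undup [seq take j (drop i T) | i <- iota 0 (size T).+1, j <- iota 0 (size T).+1].

(* Left-maximal: w is a prefix of T, or aw, bw are substrings of T for distinct a,b.
   (Such a, b necessarily occur in T, so quantifying over letters of T is exact.) *)
Definition leftM T w : bool :=
  is_substr w T &&
  (prefix w T ||
   has (fun a => has (fun b => [&& a != b, is_substr (a :: w) T & is_substr (b :: w) T]) T) T).

Definition rightM T w : bool :=
  is_substr w T &&
  (suffix w T ||
   has (fun a => has (fun b => [&& a != b, is_substr (rcons w a) T & is_substr (rcons w b) T]) T) T).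

Definition maxrep T w : bool := leftM T w && rightM T w.

(* D_T(x) = |{a in Σ : xa ∈ Substr(T)}|; every such a occurs in T. *)
Definition Dout T x : nat := size [seq a <- undup T | is_substr (rcons x a) T].

Definition cdawg_size T : nat := \sum_(x <- substrings T | maxrep T x) Dout T x.

Definition single_edit T T' : Prop :=
  (exists i a, i <= size T /\ T' = take i T ++ a :: drop i T)
  \/ (exists i a, [/\ i < size T, nth a T i != a & T' = take i T ++ a :: drop i.+1 T])
  \/ (exists i, i < size T /\ T' = take i T ++ drop i.+1 T).

Definition inN2 T T' x : bool :=
  [&& maxrep T' x, ~~ maxrep T x, x != T' & leftM T x].

Definition inQ T T' x : bool := [&& maxrep T' x, maxrep T x & x != T'].

End Strings.

(* Write T = P m Q and T' = P m' Q with |m'| <= 1, and let k = |P|.  If xa occurs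
   in T' but not in T, it occurs at some position t <= k, and x is then the
   longest prefix of T'[t..] that is a substring of T; each t determines that
   prefix.  So for x in N2 u Q, D_T'(x) <= [x in M(T)] D_T(x) + c(x), where c(x)
   counts such positions t for x; an x in N2 is not right-maximal in T, whence
   D_T(x) <= 1 <= c(x), and D_T'(x) <= [x in M(T)] D_T(x) + 2 c(x) in all cases.
   A position t counted for a left-maximal x makes T[t..k) left-maximal, and
   extending T[t..k) to the right up to its first right-maximal extension maps
   these positions injectively into M(T): a common extension of two positions
   would occur periodically, hence unboundedly often.  Finally |M(T)| <= size(T) + 1,
   since every element of M(T) other than T has an outgoing edge. *)

Set Warnings "-notation-overridden".
From mathcomp Require Import all_boot zify.
Set Implicit Arguments. Unset Strict Implicit. Unset Printing Implicit Defensive.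

Lemma take_succ_rcons (A : Type) (s : seq A) n :
  n < size s -> exists a, take n.+1 s = rcons (take n s) a.
Proof. by case: s => // a0 s lt; exists (nth a0 (a0 :: s) n); rewrite (take_nth a0). Qed.

Lemma count_le1 (A : eqType) (p : pred A) (s : seq A) : uniq s ->
  {in s &, forall x y, p x -> p y -> x = y} -> count p s <= 1.
Proof.
move=> us p_inj; rewrite -size_filter.
case E: (filter p s) => [|a l] //.
have /[dup] a_ps : a \in filter p s by rewrite E mem_head.
rewrite mem_filter => /andP[pa sa].
apply: (@uniq_leq_size _ _ [:: a]); first by rewrite -E filter_uniq.
move=> z; rewrite -E mem_filter => /andP[pz sz].
by rewrite (p_inj _ _ sz sa pz pa) mem_head.
Qed.

Lemma drop_catl (A : Type) t (s1 s2 : seq A) :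
  t <= size s1 -> drop t (s1 ++ s2) = drop t s1 ++ s2.
Proof.
by move=> ts1; rewrite -{1}(cat_take_drop t s1) -catA drop_size_cat ?size_takel.
Qed.

Definition occurs (S : eqType) (T w : seq S) p := prefix w (drop p T).

Section Occurrences.
Variables (S : eqType) (T : seq S).
Implicit Types (w x y : seq S).

Lemma occurs_infix w p : occurs T w p -> infix w T.
Proof. by move=> /prefixW/infix_trans; apply; apply: infix_drop. Qed.

Lemma infix_occurs w : infix w T -> exists p, occurs T w p.
Proof. by rewrite infixE => iw; exists (infix_index w T); rewrite /occurs prefixE. Qed.

Lemma occurs0 w : occurs T w 0 = prefix w T.
Proof. by rewrite /occurs drop0. Qed.

Lemma occurs_size w p : occurs T w p -> size w <= size T - p.
Proof. by rewrite -size_drop; apply: size_prefix. Qed.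

Lemma occurs_prefix v w p : prefix v w -> occurs T w p -> occurs T v p.
Proof. exact: prefix_trans. Qed.

Lemma occurs_drop w p n : occurs T w p -> occurs T (drop n w) (p + n).
Proof.
move=> /prefixP[s Ew]; rewrite /occurs addnC -drop_drop Ew drop_cat.
case: ltnP => [_|le]; first exact: prefix_prefix.
by rewrite drop_oversize //; apply: prefix0s.
Qed.

Lemma occurs_suffix w p : occurs T w p -> size T <= p + size w -> suffix w T.
Proof.
move=> /prefixP[s Ew] le; have s0 : s = [::].
  apply/eqP; rewrite -size_eq0.
  by move/(congr1 size): Ew; rewrite size_cat size_drop; lia.
by move: Ew; rewrite s0 cats0 => <-; apply: suffix_drop.
Qed.

Lemma occurs_rcons w p : occurs T w p -> p + size w < size T ->
  exists a, occurs T (rcons w a) p.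
Proof.
rewrite /occurs prefixE => /eqP Ew lt.
have [|a Ea] := @take_succ_rcons _ (drop p T) (size w); first by rewrite size_drop; lia.
by exists a; rewrite prefixE size_rcons Ea Ew.
Qed.

Lemma occurs_rconsE d w a p : occurs T (rcons w a) p ->
  [/\ occurs T w p, p + size w < size T & nth d T (p + size w) = a].
Proof.
move=> /[dup] owa /prefixP[s Ew]; split.
- exact: occurs_prefix (prefix_rcons w a) owa.
- by have := occurs_size owa; rewrite size_rcons; lia.
- by rewrite -nth_drop Ew nth_cat size_rcons ltnSn nth_rcons ltnn eqxx.
Qed.

End Occurrences.

Section Maximality.
Variables (S : eqType) (T : seq S).
Implicit Types (v w x : seq S).

Lemma leftMP w : reflect
  (prefix w T \/ exists a b, [/\ a != b, infix (a :: w) T & infix (b :: w) T])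
  (leftM T w).
Proof.
apply: (iffP andP) => [[_ /orP[pw|]]|]; first by left.
  by move=> /hasP[a _ /hasP[b _ /and3P[ab ia ib]]]; right; exists a, b.
case=> [pw|[a [b [ab ia ib]]]]; first by rewrite /is_substr (prefixW pw) pw.
split; first exact: consl_infix ia.
have mem_head_infix c : infix (c :: w) T -> c \in T by move/consr_infix; rewrite infix1s.
apply/orP; right; apply/hasP; exists a; first exact: mem_head_infix ia.
by apply/hasP; exists b; [apply: mem_head_infix ib | rewrite /is_substr ab ia ib].
Qed.

Lemma rightMP w : reflect
  (suffix w T \/ exists a b, [/\ a != b, infix (rcons w a) T & infix (rcons w b) T])
  (rightM T w).
Proof.
have mem_last a : infix (rcons w a) T -> a \in T.
  by move/mem_infix; apply; rewrite mem_rcons mem_head.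
apply: (iffP andP) => [[_ /orP[sw|]]|]; first by left.
  by move=> /hasP[a _ /hasP[b _ /and3P[ab ia ib]]]; right; exists a, b.
case=> [sw|[a [b [ab ia ib]]]]; first by rewrite /is_substr (suffixW sw) sw.
split; first exact: infix_trans (infix_rcons w a) ia.
apply/orP; right; apply/hasP; exists a; first exact: mem_last ia.
by apply/hasP; exists b; [apply: mem_last ib | rewrite /is_substr ab ia ib].
Qed.

Lemma leftM_infix w : leftM T w -> infix w T.
Proof. by case/andP. Qed.

Lemma leftM_prefix v w : prefix v w -> leftM T w -> leftM T v.
Proof.
move=> vw /leftMP[pw|[a [b [ab ia ib]]]]; apply/leftMP.
  by left; apply: prefix_trans pw.
have cons_infix c : infix (c :: w) T -> infix (c :: v) T.
  by apply: infix_trans; apply: prefixW; rewrite prefix_cons eqxx.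
by right; exists a, b; split; rewrite // cons_infix.
Qed.

Lemma not_rightM_occurs_lt w p : ~~ rightM T w -> occurs T w p -> p + size w < size T.
Proof.
move=> nRw ow; rewrite ltnNge; apply: contra nRw => le.
by apply/rightMP; left; apply: occurs_suffix ow le.
Qed.

Lemma not_rightM_occurs_rcons w a p q : ~~ rightM T w ->
  occurs T (rcons w a) q -> occurs T w p -> occurs T (rcons w a) p.
Proof.
move=> nRw owa ow; have [b owb] := occurs_rcons ow (not_rightM_occurs_lt nRw ow).
case: (b =P a) owb => [-> //|/eqP ba owb].
case/rightMP: nRw; right; exists b, a.
by rewrite ba (occurs_infix owa) (occurs_infix owb).
Qed.

Lemma leftM_rcons w a : leftM T w -> ~~ rightM T w -> infix (rcons w a) T ->
  leftM T (rcons w a).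
Proof.
move=> /leftMP Lw nRw /infix_occurs[q owa]; apply/leftMP.
case: Lw => [pw|[b [c [bc ib ic]]]].
  by left; rewrite -occurs0; apply: (not_rightM_occurs_rcons nRw owa); rewrite occurs0.
have cons_rcons e : infix (e :: w) T -> infix (e :: rcons w a) T.
  case/infix_occurs => r oew.
  have ow : occurs T w r.+1 by move: (occurs_drop 1 oew); rewrite addn1 /= drop0.
  have [_ _ nth_a] := occurs_rconsE a (not_rightM_occurs_rcons nRw owa ow).
  have lt : r + size (e :: w) < size T by rewrite /= addnS -addSn not_rightM_occurs_lt.
  have [f oewf] := occurs_rcons oew lt.
  have [_ _] := occurs_rconsE a oewf; rewrite /= addnS -addSn nth_a => af.
  by rewrite -af in oewf; apply: occurs_infix oewf.
by right; exists b, c; split; rewrite // cons_rcons.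
Qed.

Lemma maxrep_rcons x : maxrep T x -> x != T -> exists a, infix (rcons x a) T.
Proof.
case/andP => /leftMP Lx /rightMP Rx xT.
case: Rx => [sx|[a [_ [_ ia _]]]]; last by exists a.
have extend p : occurs T x p -> p + size x < size T -> exists a, infix (rcons x a) T.
  by move=> ox /(occurs_rcons ox)[a oxa]; exists a; apply: occurs_infix oxa.
case: Lx => [px|[a [b [ab /infix_occurs[p oa] /infix_occurs[q ob]]]]].
  apply: (extend 0); rewrite ?occurs0 // add0n ltn_neqAle size_prefix // andbT.
  by apply: contra xT => /eqP sxT; move: px; rewrite prefixE sxT take_size eq_sym.
have oxa : occurs T x p.+1 by move: (occurs_drop 1 oa); rewrite addn1 /= drop0.
have oxb : occurs T x q.+1 by move: (occurs_drop 1 ob); rewrite addn1 /= drop0.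
have [lta|gea] := ltnP (p.+1 + size x) (size T); first exact: extend oxa lta.
have [ltb|geb] := ltnP (q.+1 + size x) (size T); first exact: extend oxb ltb.
have := occurs_size oa; have := occurs_size ob; rewrite /= => szb sza.
have pq : p = q by lia.
move: oa ob; rewrite /occurs pq; case: (drop q T) => [|t s] //=.
by move=> /andP[/eqP ea _] /andP[/eqP eb _]; move: ab; rewrite ea eb eqxx.
Qed.

Lemma Dout_gt0 x a : infix (rcons x a) T -> 0 < Dout T x.
Proof.
move=> ixa; rewrite /Dout size_filter -has_count; apply/hasP; exists a => //.
by rewrite mem_undup; apply: (mem_infix ixa); rewrite mem_rcons mem_head.
Qed.

Lemma Dout_not_rightM x : ~~ rightM T x -> Dout T x <= 1.
Proof.
move=> nRx; rewrite /Dout size_filter; apply: count_le1 (undup_uniq T) _.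
move=> a b _ _ ia ib; apply/eqP; apply: contraNT nRx => ab.
by apply/rightMP; right; exists a, b.
Qed.

Lemma mem_substrings x : (x \in substrings T) = infix x T.
Proof.
rewrite /substrings mem_undup; apply/allpairsP/idP => [[[i j] [_ _ ->]]|ix].
  exact: occurs_infix (prefix_take _ _).
exists (infix_index x T, size x).
rewrite !mem_iota /= !add0n !ltnS infixTindex ix size_infix //.
by move: ix; rewrite infixE => /eqP.
Qed.

Lemma count_maxrep : count (maxrep T) (substrings T) <= cdawg_size T + 1.
Proof.
rewrite -size_filter -(count_predC (pred1 T)) !count_filter addnC.
apply: leq_add; last first.
  apply: (@leq_trans (count (pred1 T) (substrings T))).
    by apply: sub_count => x /andP[].
  by rewrite count_uniq_mem ?undup_uniq ?leq_b1.
rewrite -sum1_count /cdawg_size big_mkcondl; apply: leq_sum => x mx /=.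
by case: eqP => [//|/eqP xT]; have [a /Dout_gt0] := maxrep_rcons mx xT.
Qed.

End Maximality.

Definition slice (S : eqType) (T : seq S) i e := take (e - i) (drop i T).

Section RightClosure.
Variables (S : eqType) (T : seq S).
Implicit Types (y : seq S).

Lemma occurs_slice i e : occurs T (slice T i e) i.
Proof. exact: prefix_take. Qed.

Lemma infix_slice i e : infix (slice T i e) T.
Proof. exact: occurs_infix (occurs_slice i e). Qed.

Lemma size_slice i e : i <= e -> e <= size T -> size (slice T i e) = e - i.
Proof. by move=> ie eT; rewrite size_takel // size_drop; lia. Qed.

Lemma take_slice i e l : l <= e - i -> take l (slice T i e) = slice T i (i + l).
Proof. by move=> le; rewrite /slice take_takel // addKn. Qed.

Lemma slice_rcons i e : i <= e -> e < size T ->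
  exists a, slice T i e.+1 = rcons (slice T i e) a.
Proof.
by move=> ie eT; rewrite /slice subSn //; apply: take_succ_rcons; rewrite size_drop; lia.
Qed.

Lemma rightM_drop t : rightM T (drop t T).
Proof. by apply/rightMP; left; apply: suffix_drop. Qed.

Lemma occurs_extend y n p q :
  (forall l, n <= l < size y -> ~~ rightM T (take l y)) ->
  occurs T y q -> occurs T (take n y) p -> occurs T y p.
Proof.
move=> nR oyq oyn.
have ext l : n <= l < size y -> occurs T (take l y) p -> occurs T (take l.+1 y) p.
  move=> /andP[nl ly] oyl; have [a Ea] := take_succ_rcons ly.
  rewrite Ea in oyl *; apply: (not_rightM_occurs_rcons _ _ oyl); first by rewrite nR ?nl.
  by rewrite -Ea; apply: occurs_prefix oyq; apply: prefix_take.
suff /(_ (size y)) : forall j, occurs T (take (n + j) y) p.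
  by rewrite take_oversize //; lia.
elim=> [|j IH]; first by rewrite addn0.
have [lt|ge] := ltnP (n + j) (size y); first by rewrite addnS ext ?lt ?leq_addr.
by rewrite !take_oversize in IH * => //; lia.
Qed.

Lemma not_rightM_occurs_gap y n p q :
  (forall l, n <= l < size y -> ~~ rightM T (take l y)) ->
  occurs T y p -> occurs T y q -> p < q -> size y < q - p + n.
Proof.
move=> nR oyp oyq pq; rewrite ltnNge; apply/negP => le; set d := q - p.
have drop_take : drop d y = take (size y - d) y.
  move: oyp oyq; rewrite /occurs !prefixE => /eqP Ep /eqP Eq.
  have Ey : size y = size y - d + d by lia.
  rewrite -[in LHS]Ep {1}Ey -take_drop drop_drop /d subnK ?(ltnW pq) //.
  by rewrite -[X in _ = take _ X]Eq take_takel ?leq_subr.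
(* [drop d y] is a prefix of [y] whose extensions to [y] are forced. *)
have shift r : occurs T y r -> occurs T y (r + d).
  move=> oyr; apply: (occurs_extend (n := size y - d) _ oyq).
    by move=> l /andP[dl ly]; rewrite nR // ly andbT; lia.
  by rewrite -drop_take; apply: occurs_drop.
have far i : occurs T y (q + i * d).
  elim: i => [|i IH]; first by rewrite addn0.
  by rewrite mulSn addnCA addnC; apply: shift.
have := occurs_size (far (size T)).
have : size T <= size T * d by rewrite leq_pmulr ?subn_gt0.
by rewrite /d in le *; lia.
Qed.

(* The least j such that T[t..k+j) is right-maximal; j = size T - k always
   qualifies, suffixes of T being right-maximal. *)
Definition right_ext k t :=
  find (fun j => rightM T (slice T t (k + j))) (iota 0 (size T - k).+1).

Definition right_closure k t := slice T t (k + right_ext k t).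

Lemma right_ext_spec k t : k <= size T ->
  [/\ k + right_ext k t <= size T, rightM T (right_closure k t)
    & forall j, j < right_ext k t -> ~~ rightM T (slice T t (k + j))].
Proof.
move=> kT; set p := fun j => rightM T (slice T t (k + j)).
have has_p : has p (iota 0 (size T - k).+1).
  apply/hasP; exists (size T - k); first by rewrite mem_iota; lia.
  by rewrite /p subnKC // /slice take_oversize ?rightM_drop // size_drop.
have ltf : right_ext k t < (size T - k).+1.
  by rewrite /right_ext -[X in _ < X](size_iota 0) -has_find.
split; first by lia.
  by have := nth_find 0 has_p; rewrite nth_iota.
by move=> j lt; have := before_find 0 lt; rewrite nth_iota ?add0n => [->|]; last lia.
Qed.

Lemma right_closure_maxrep k t : t <= k -> k <= size T -> leftM T (slice T t k) ->
  maxrep T (right_closure k t).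
Proof.
move=> tk kT Lk; have [extT rM notR] := right_ext_spec t kT.
rewrite /maxrep rM andbT.
suff: forall j, j <= right_ext k t -> leftM T (slice T t (k + j)) by apply.
elim=> [|j IH] lt; first by rewrite addn0.
have [a Ea] : exists a, slice T t (k + j).+1 = rcons (slice T t (k + j)) a.
  by apply: slice_rcons; lia.
rewrite addnS Ea; apply: leftM_rcons; [exact: IH (ltnW lt) | exact: notR |].
by rewrite -Ea infix_slice.
Qed.

Lemma right_closure_neq k t1 t2 : t1 < t2 -> t2 <= k -> k <= size T ->
  right_closure k t1 != right_closure k t2.
Proof.
move=> lt t2k kT; set y := right_closure k t1; apply/negP => /eqP E.
have [ext1 _ _] := right_ext_spec t1 kT; have [ext2 _ notR2] := right_ext_spec t2 kT.
have size1 : size y = k + right_ext k t1 - t1 by rewrite size_slice //; lia.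
have size2 : size y = k + right_ext k t2 - t2 by rewrite E size_slice //; lia.
have oy1 : occurs T y t1 by apply: occurs_slice.
have oy2 : occurs T y t2 by rewrite E; apply: occurs_slice.
suff: size y < t2 - t1 + (k - t2) by lia.
apply: (not_rightM_occurs_gap _ oy1 oy2 lt) => l /andP[kl ly].
rewrite E take_slice; last by lia.
by rewrite (_ : t2 + l = k + (t2 + l - k)); [apply: notR2 | ]; lia.
Qed.

Lemma count_leftM_slices k : k <= size T ->
  count (fun t => leftM T (slice T t k)) (iota 0 k.+1)
    <= count (maxrep T) (substrings T).
Proof.
move=> kT; rewrite -!size_filter -(size_map (right_closure k)).
apply: uniq_leq_size.
  rewrite map_inj_in_uniq ?filter_uniq ?iota_uniq // => t1 t2.
  rewrite !mem_filter !mem_iota /= => /andP[_ t1k] /andP[_ t2k] E.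
  apply/eqP; apply: contraT => ne; case: (ltngtP t1 t2) ne => // lt _.
    by have := right_closure_neq lt t2k kT; rewrite E eqxx.
  by have := right_closure_neq lt t1k kT; rewrite E eqxx.
move=> z /mapP[t]; rewrite mem_filter mem_iota => /andP[Lt /andP[_ tk]] ->.
by rewrite mem_filter right_closure_maxrep // mem_substrings infix_slice.
Qed.

End RightClosure.

Definition longest_infix_prefix (S : eqType) (T u x : seq S) :=
  [&& prefix x u, infix x T & (x == u) || ~~ infix (take (size x).+1 u) T].

Section LongestInfixPrefix.
Variables (S : eqType) (T u : seq S).

Lemma longest_infix_prefix_max x w : longest_infix_prefix T u x ->
  prefix w u -> infix w T -> prefix w x.
Proof.
move=> /and3P[xu _ xmax] wu iwT.
have [le|lt] := leqP (size w) (size x).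
  move: xu wu; rewrite !prefixE => /eqP xu /eqP wu.
  by rewrite -xu take_takel // wu.
case/orP: xmax => [/eqP ux|/negP[]]; first by have := size_prefix wu; rewrite -ux; lia.
move: wu; rewrite prefixE => /eqP wu.
by rewrite -(take_takel u lt) wu; apply: infix_trans (infix_take _ _) iwT.
Qed.

Lemma longest_infix_prefix_uniq x y :
  longest_infix_prefix T u x -> longest_infix_prefix T u y -> x = y.
Proof.
move=> /[dup] lx /and3P[xu ix _] /[dup] ly /and3P[yu iy _].
have := longest_infix_prefix_max ly xu ix; rewrite prefixE => /eqP {1}<-.
by rewrite take_oversize // size_prefix // (longest_infix_prefix_max lx yu iy).
Qed.

End LongestInfixPrefix.

Lemma N2_or_Q_leftM (S : eqType) (T T' x : seq S) :
  inN2 T T' x || inQ T T' x -> leftM T x.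
Proof. by case/orP => [/and4P[] | /and3P[_ /andP[]]]. Qed.

Section Edit.
Variables (S : eqType) (P m m' Q : seq S).
Hypothesis m'_small : size m' <= 1.
Local Notation T := (P ++ m ++ Q).
Local Notation T' := (P ++ m' ++ Q).
Local Notation k := (size P).
Implicit Types (w x : seq S).

Definition longest_prefix_at t x := longest_infix_prefix T (drop t T') x.

Definition longest_prefix_count x := count (longest_prefix_at ^~ x) (iota 0 k.+1).

Lemma drop_edited_tail t : k < t -> drop t T' = drop (t - size (P ++ m')) Q.
Proof. by move=> kt; rewrite catA drop_cat size_cat ltnNge (_ : _ + _ <= t) //; lia. Qed.

Lemma occurs_edited_tail w t : k < t -> occurs T' w t -> infix w T.
Proof.
move=> kt; rewrite /occurs drop_edited_tail // => /prefixW /infix_trans; apply.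
by do 2 apply: infix_catl; apply: infix_drop.
Qed.

Lemma new_letter_longest_prefix x a : infix x T ->
  infix (rcons x a) T' -> ~~ infix (rcons x a) T ->
  exists2 t, t <= k & longest_prefix_at t x && occurs T' (rcons x a) t.
Proof.
move=> ix /infix_occurs[t oxa] nixa; exists t.
  by rewrite leqNgt; apply: contra nixa => kt; apply: occurs_edited_tail oxa.
rewrite oxa andbT; apply/and3P; split=> //.
  exact: occurs_prefix (prefix_rcons x a) oxa.
by move: oxa; rewrite /occurs prefixE size_rcons => /eqP->; rewrite nixa orbT.
Qed.

Lemma longest_prefix_leftM t x : t <= k -> longest_prefix_at t x -> leftM T x ->
  leftM T (slice T t k).
Proof.
move=> tk lx Lx.
have sliceE : slice T t k = drop t P.
  by rewrite /slice drop_catl // take_size_cat // size_drop.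
rewrite sliceE; apply: leftM_prefix Lx; apply: longest_infix_prefix_max lx _ _.
  by rewrite drop_catl //; apply: prefix_prefix.
by rewrite -sliceE infix_slice.
Qed.

Lemma not_rightM_longest_prefix x : infix x T -> ~~ rightM T x -> rightM T' x ->
  exists2 t, t <= k & longest_prefix_at t x.
Proof.
move=> ix nRx /rightMP[sx|[a [b [ab ia ib]]]].
  set t := size T' - size x; have Ex : drop t T' = x by apply/eqP; rewrite -suffixE.
  exists t; last first.
    by rewrite /longest_prefix_at /longest_infix_prefix Ex prefix_refl ix eqxx.
  rewrite leqNgt; apply: contra nRx => kt; apply/rightMP; left.
  by rewrite -Ex drop_edited_tail //; do 2 apply: suffix_catr; apply: suffix_drop.
have [iaT|niaT] := boolP (infix (rcons x a) T); last first.
  by have [t tk /andP[lx _]] := new_letter_longest_prefix ix ia niaT; exists t.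
have [ibT|nibT] := boolP (infix (rcons x b) T); last first.
  by have [t tk /andP[lx _]] := new_letter_longest_prefix ix ib nibT; exists t.
by case/rightMP: nRx; right; exists a, b.
Qed.

Lemma Dout_edit x : infix x T -> Dout T' x <= Dout T x + longest_prefix_count x.
Proof.
move=> ix; rewrite /Dout; set F := filter _ (undup T').
rewrite -(count_predC [pred a | infix (rcons x a) T] F); apply: leq_add.
  rewrite -size_filter; apply: uniq_leq_size; first by rewrite !filter_uniq ?undup_uniq.
  move=> a; rewrite !mem_filter /= => /andP[ixa _]; rewrite /is_substr ixa mem_undup.
  by apply: (mem_infix ixa); rewrite mem_rcons mem_head.
case EF: F => [//|d ?]; rewrite -EF -size_filter.
rewrite /longest_prefix_count -size_filter.
rewrite -(size_map (fun t => nth d T' (t + size x))).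
apply: uniq_leq_size; first by rewrite !filter_uniq ?undup_uniq.
move=> a; rewrite !mem_filter => /andP[nixa /andP[ixa _]].
have [t tk /andP[lx oxa]] := new_letter_longest_prefix ix ixa nixa.
apply/mapP; exists t; first by rewrite mem_filter lx mem_iota.
by have [_ _ ->] := occurs_rconsE d oxa.
Qed.

Lemma Dout_edit_bound x : inN2 T T' x || inQ T T' x ->
  Dout T' x <= (if maxrep T x then Dout T x else 0) + 2 * longest_prefix_count x.
Proof.
move=> Rx; have Lx := N2_or_Q_leftM Rx.
have := Dout_edit (leftM_infix Lx); case: ifP => [_|mx]; first by lia.
have nRx : ~~ rightM T x by move: mx; rewrite /maxrep Lx /= => ->.
have RT'x : rightM T' x.
  by case/orP: Rx => [/and4P[/andP[]] // | /and3P[_ mT _]]; rewrite mT in mx.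
have [t tk lx] := not_rightM_longest_prefix (leftM_infix Lx) nRx RT'x.
have : 0 < longest_prefix_count x.
  by rewrite -has_count; apply/hasP; exists t; rewrite ?mem_iota.
by have := Dout_not_rightM nRx; lia.
Qed.

Lemma sum_longest_prefix_count :
  \sum_(x <- substrings T' | inN2 T T' x || inQ T T' x) longest_prefix_count x
    <= count (fun t => leftM T (slice T t k)) (iota 0 k.+1).
Proof.
rewrite /longest_prefix_count; under eq_bigr => x _ do rewrite -sum1_count.
rewrite (exchange_big_dep xpredT) // -sum1_count [X in _ <= X]big_mkcond.
rewrite [X in X <= _]big_seq [X in _ <= X]big_seq; apply: leq_sum => t.
rewrite mem_iota ltnS => /andP[_ tk]; rewrite sum1_count; case: ifP => [_|nL].
  apply: count_le1 (undup_uniq _) _ => x y _ _ /andP[_ lx] /andP[_ ly].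
  exact: longest_infix_prefix_uniq lx ly.
rewrite leqn0 eqn0Ngt -has_count; apply/hasP => -[x _ /andP[Rx lx]].
by rewrite (longest_prefix_leftM tk lx (N2_or_Q_leftM Rx)) in nL.
Qed.

Lemma edit_bound :
  \sum_(x <- substrings T' | inN2 T T' x || inQ T T' x) Dout T' x
    <= 3 * cdawg_size T + 2.
Proof.
set R := fun x => inN2 T T' x || inQ T T' x.
apply: (@leq_trans (\sum_(x <- substrings T' | R x)
  ((if maxrep T x then Dout T x else 0) + 2 * longest_prefix_count x))).
  by apply: leq_sum => x; apply: Dout_edit_bound.
rewrite big_split -big_distrr /=.
have old : \sum_(x <- substrings T' | R x) (if maxrep T x then Dout T x else 0)
    <= cdawg_size T.
  rewrite -big_mkcondr; apply: uniq_sub_le_big_cond => //.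
  - by move=> a b; apply: leq_addr.
  - by rewrite filter_uniq ?undup_uniq.
  - by rewrite filter_uniq ?undup_uniq.
  move=> x; rewrite !mem_filter => /andP[/andP[_ mx] _].
  by rewrite mx mem_substrings /=; apply: leftM_infix; case/andP: mx.
have := sum_longest_prefix_count; have := @count_leftM_slices _ T k.
rewrite size_cat leq_addr => /(_ isT); have := count_maxrep T.
by rewrite /R in old *; lia.
Qed.

End Edit.

Lemma single_edit_split (S : eqType) (T T' : seq S) : single_edit T T' ->
  exists P m m' Q, [/\ size m' <= 1, T = P ++ m ++ Q & T' = P ++ m' ++ Q].
Proof.
have splitT i : T = take i T ++ take 1 (drop i T) ++ drop i.+1 T.
  by rewrite (_ : drop i.+1 T = drop 1 (drop i T)) ?cat_take_drop // drop_drop add1n.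
case=> [[i [a [_ ->]]] | [[i [a [_ _ ->]]] | [i [_ ->]]]].
- by exists (take i T), [::], [:: a], (drop i T); rewrite cat_take_drop.
- exists (take i T), (take 1 (drop i T)), [:: a], (drop i.+1 T).
  by split=> //; apply: splitT.
- exists (take i T), (take 1 (drop i T)), [::], (drop i.+1 T).
  by split=> //; apply: splitT.
Qed.

Theorem lemma12 (S : eqType) (T T' : seq S) :
  single_edit T T' ->
  \sum_(x <- substrings T' | inN2 T T' x || inQ T T' x) Dout T' x
    <= 3 * cdawg_size T + 2.
Proof.
by case/single_edit_split => [P [m [m' [Q [m'_small -> ->]]]]]; apply: edit_bound.
Qed.
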